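(* Let $n\ge1$ and $s\ge1$ be integers, $\delta>0$, and $p_t\in[0,1)$. Let $\ell=\frac{6(2+\delta)^2}{\delta^2}\cdot\frac{\log(\sqrt{2}\,n)}{1-p_t}$ and suppose $\ell\le s$. Let $A\in\{0,1\}^{s\times n}$ be a random matrix whose entries are independent with $\Pr[A_{i,j}=1]=p_a=\ell/s$, and, independently of $A$, let $\mathcal{R}\subseteq[s]$ be a random set containing each $i\in[s]$ independently with probability $1-p_t$. Then with probability at least $1-\frac1n$ there exists a vector $\mathbf{b}\in\mathbb{R}^{|\mathcal{R}|}$ with non-negative entries such that $\mathbf{b}^TA_{\mathcal{R}}=(a_1,\ldots,a_n)$ with $1\le a_j\le1+\delta$ for all $j\in[n]$, where $A_{\mathcal{R}}$ is the submatrix of $A$ consisting of the rows indexed by $\mathcal{R}$.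
   Context: Random straggler model: each of the $s$ compute nodes independently fails to respond (is a straggler) with probability $p_t$; $\mathcal{R}$ is the set of non-stragglers. The conclusion is that the random assignment matrix $A$ satisfies the straggler-resilience property (existence of a non-negative recovery vector $\mathbf{b}$ with $\mathbf{b}^TA_{\mathcal{R}}$ having all entries in $[1,1+\delta]$) for the realized set $\mathcal{R}$ of non-stragglers. $\log$ denotes the natural logarithm. *)

From HB Require Import structures.
From mathcomp Require Import all_boot all_order all_algebra.
From mathcomp Require Import all_classical all_reals all_analysis.
Set Implicit Arguments. Unset Strict Implicit. Unset Printing Implicit Defensive.
Import Order.TTheory GRing.Theory Num.Theory.
Local Open Scope ring_scope.

Definition ell_param (R : realType) (n : nat) (delta pt : R) : R :=
  (6 * (2 + delta) ^+ 2 / delta ^+ 2) * (ln (Num.sqrt 2 * n%:R) / (1 - pt)).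

Definition matrix_weight (R : realType) (s n : nat) (pa : R)
  (A : 'M[bool]_(s, n)) : R :=
  \prod_(i < s) \prod_(j < n) (if A i j then pa else 1 - pa).

Definition set_weight (R : realType) (s : nat) (pt : R) (Rs : {set 'I_s}) : R :=
  \prod_(i < s) (if i \in Rs then 1 - pt else pt).

(* A_R: the submatrix of A (as a real matrix) with rows indexed by Rs,
   listed in increasing order. *)
Definition sub_rows (R : realType) (s n : nat) (A : 'M[bool]_(s, n))
  (Rs : {set 'I_s}) : 'M[R]_(#|Rs|, n) :=
  \matrix_(k < #|Rs|, j < n) ((A (@enum_val _ (mem Rs) k) j)%:R : R).

Definition resilient (R : realType) (s n : nat) (delta : R)
  (A : 'M[bool]_(s, n)) (Rs : {set 'I_s}) : Prop :=
  exists b : 'rV[R]_#|Rs|,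
    (forall k, 0 <= b 0 k) /\
    (forall j, 1 <= (b *m sub_rows R A Rs) 0 j <= 1 + delta).

(* Probability (under the joint product law of A and Rs) of the event. *)
Definition prob_resilient (R : realType) (s n : nat) (pa pt delta : R) : R :=
  \sum_(A : 'M[bool]_(s, n)) \sum_(Rs : {set 'I_s})
     (if `[< resilient delta A Rs >] then matrix_weight pa A * set_weight pt Rs
      else 0).

From HB Require Import structures.
From mathcomp Require Import all_boot all_order all_algebra.
From mathcomp Require Import all_classical all_reals all_analysis.
From mathcomp Require Import lra ring.
Import Order.TTheory GRing.Theory Num.Theory.
Import numFieldNormedType.Exports.
Local Open Scope ring_scope.

(* Take b := lo^-1 (1, ..., 1) with lo := (1 - e) mu, where e := delta / (2 + delta)
   and mu := s pa (1 - pt).  Then b^T A_R lists the column counts X_j / lo, where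
   X_j := #{i in R | A i j = 1} is a sum of s independent Bernoulli(pa (1 - pt))
   variables with mean mu; since (1 + delta) (1 - e) = 1 + e, b is a valid recovery
   vector as soon as every X_j lies in [(1 - e) mu, (1 + e) mu].  By the Chernoff
   bounds each column leaves this interval with probability at most
   2 exp (- mu e^2 / 3), and ell is chosen so that mu e^2 / 3 = 2 log (sqrt 2 n),
   i.e. this probability is 1 / n^2; a union bound over the n columns concludes. *)

Lemma sum_mx_prod (R : comPzSemiRingType) (s n : nat) (F : 'I_s -> 'I_n -> bool -> R) :
  \sum_(A : 'M[bool]_(s, n)) \prod_i \prod_j F i j (A i j) =
  \prod_i \prod_j \sum_b F i j b.
Proof.
rewrite pair_big /= bigA_distr_bigA /=.
rewrite (reindex (@Matrix bool s n)) /=; last by exists (@mx_val bool s n) => -[f].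
by apply: eq_bigr => f _; rewrite pair_big; apply: eq_bigr => -[i j].
Qed.

Lemma sum_set_prod (R : comPzSemiRingType) (s : nat) (F : 'I_s -> bool -> R) :
  \sum_(S : {set 'I_s}) \prod_i F i (i \in S) = \prod_i \sum_b F i b.
Proof.
rewrite bigA_distr_bigA /=.
rewrite (reindex (fun f : {ffun 'I_s -> bool} => [set i | f i])) /=; last first.
  exists (fun S : {set 'I_s} => [ffun i => i \in S]) => [f _|S _].
    by apply/ffunP => i; rewrite ffunE inE.
  by apply/setP => i; rewrite inE ffunE.
by apply: eq_bigr => f _; apply: eq_bigr => i _; rewrite inE.
Qed.

Section LogarithmBounds.
Context {R : realType}.

Lemma ler_of_is_derive_ge0 (f df : R -> R) (a b : R) : a <= b ->
  (forall x, a <= x <= b -> is_derive x 1 f (df x)) ->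
  (forall x, a <= x <= b -> 0 <= df x) -> f a <= f b.
Proof.
move=> ab f_df df_ge0.
have [c cab fbfa] : exists2 c, c \in `[a, b]%R & f b - f a = df c * (b - a).
  apply: MVT_segment => //.
    by move=> x; rewrite in_itv /= => /andP[ax xb]; apply: f_df; rewrite !ltW.
  apply: continuous_in_subspaceT => x; rewrite inE /= in_itv /= => xab.
  by apply/differentiable_continuous/derivable1_diffP; have [] := f_df x xab.
move: cab; rewrite in_itv /= => cab.
by rewrite -subr_ge0 fbfa mulr_ge0 ?df_ge0 ?subr_ge0.
Qed.

Lemma ln_ge_twice_ratio (y : R) : 1 <= y -> 2 * (y - 1) / (y + 1) <= ln y.
Proof.
move=> y1.
pose f (x : R) := ln x + 4 * (x + 1)^-1.
suff : f 1 <= f y.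
  have -> : 2 * (y - 1) / (y + 1) = 4 * (1 + 1)^-1 - 4 * (y + 1)^-1.
    by field; rewrite gt_eqF //; lra.
  by rewrite /f ln1 add0r; lra.
apply: (@ler_of_is_derive_ge0 f (fun x => (x - 1) ^+ 2 / (x * (x + 1) ^+ 2)))
  => // x /andP[x1 _]; have x0 : 0 < x by lra.
  have x1_neq0 : (id + cst 1) x != 0 :> R by rewrite gt_eqF // addr_gt0.
  have d_x1 := is_deriveD (is_derive_id x (1 : R)) (is_derive_cst (1 : R) x 1).
  apply: is_derive_eq (is_deriveD (is_derive1_ln x0) (is_deriveZ 4 (is_deriveV x1_neq0 d_x1))) _.
  rewrite /= addr0 scaler1 scalerN.
  change (x^-1 - 4 * (x + 1) ^- 2 = (x - 1) ^+ 2 / (x * (x + 1) ^+ 2)).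
  by field; rewrite !gt_eqF //; lra.
by rewrite divr_ge0 ?sqr_ge0 // mulr_ge0 ?sqr_ge0 //; lra.
Qed.

Lemma ln_le_half_diff_inv (y : R) : 1 <= y -> ln y <= (y - y^-1) / 2.
Proof.
move=> y1.
pose f (x : R) := 2^-1 * (x - x^-1) - ln x.
suff : f 1 <= f y by rewrite /f ln1 invr1 subrr mulr0 subr0 mulrC; lra.
apply: (@ler_of_is_derive_ge0 f (fun x => (x - 1) ^+ 2 / (2 * x ^+ 2)))
  => // x /andP[x1 _]; have x0 : 0 < x by lra.
  have x_neq0 : id x != 0 :> R by rewrite gt_eqF.
  have d_x := is_derive_id x (1 : R).
  apply: is_derive_eq (is_deriveB (is_deriveZ (2^-1) (is_deriveB d_x (is_deriveV x_neq0 d_x)))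
    (is_derive1_ln x0)) _.
  change (2^-1 * (1 - (- x ^- 2) * 1) - x^-1 = (x - 1) ^+ 2 / (2 * x ^+ 2)).
  by field; rewrite gt_eqF.
by rewrite divr_ge0 ?sqr_ge0 // mulr_ge0 ?sqr_ge0 //; lra.
Qed.

Lemma chernoff_upper_exponent (e : R) : 0 <= e <= 1 ->
  e ^+ 2 / 3 <= (1 + e) * ln (1 + e) - e.
Proof.
move=> /andP[e0 e1].
have := @ln_ge_twice_ratio (1 + e); rewrite lerDl => /(_ e0).
rewrite addrAC subrr add0r -addrA ler_pdivrMr; last lra.
move=> twice_e_le_ln.
rewrite -(@ler_pM2r _ (2 + e)); last lra.
have : 0 <= e ^+ 2 * (1 - e) by rewrite mulr_ge0 ?sqr_ge0 //; lra.
nra.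
Qed.

Lemma chernoff_lower_exponent (e : R) : 0 <= e < 1 ->
  e ^+ 2 / 2 <= (1 - e) * ln (1 - e) + e.
Proof.
move=> /andP[e0 e1].
have pos_1e : 0 < 1 - e by lra.
have := @ln_le_half_diff_inv (1 - e)^-1; rewrite invf_ge1 ?lerBlDr ?lerDl // => /(_ e0).
rewrite invrK lnV ?posrE // => ln_le.
have := ler_wpM2r (ltW pos_1e) ln_le.
have -> : ((1 - e)^-1 - (1 - e)) / 2 * (1 - e) = e - e ^+ 2 / 2.
  by field; rewrite gt_eqF.
lra.
Qed.

End LogarithmBounds.

Section ColumnCounts.
Context {R : realType} {s n : nat}.

Definition col_count (j : 'I_n) (A : 'M[bool]_(s, n)) (Rs : {set 'I_s}) : R :=
  \sum_(i in Rs) (A i j)%:R.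

Lemma expR_col_count (t : R) (j : 'I_n) (A : 'M[bool]_(s, n)) (Rs : {set 'I_s}) :
  expR (t * col_count j A Rs) = \prod_i (if (i \in Rs) && A i j then expR t else 1).
Proof.
rewrite mulr_sumr expR_sum big_mkcond /=; apply: eq_bigr => i _.
by case: (i \in Rs); case: (A i j); rewrite /= ?mulr1 ?mulr0 ?expR0.
Qed.

Lemma resilient_of_col_count (delta lo : R) (A : 'M[bool]_(s, n)) (Rs : {set 'I_s}) :
  0 < lo -> (forall j, lo <= col_count j A Rs <= (1 + delta) * lo) -> resilient delta A Rs.
Proof.
move=> lo_gt0 col_count_bounds; exists (const_mx lo^-1); split.
  by move=> k; rewrite mxE invr_ge0 ltW.
move=> j; have /andP[lo_le le_hi] := col_count_bounds j.
have -> : ((const_mx lo^-1 : 'rV_#|Rs|) *m sub_rows R A Rs) 0 j = lo^-1 * col_count j A Rs.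
  rewrite mxE /col_count mulr_sumr [RHS]big_enum_val; apply: eq_bigr => k _.
  by rewrite !mxE.
by rewrite mulrC ler_pdivlMr // mul1r ler_pdivrMr // lo_le mulrC.
Qed.

End ColumnCounts.

Section RandomAssignment.
Context {R : realType} {s n : nat} (pa pt : R).
Hypotheses (pa01 : 0 <= pa <= 1) (pt01 : 0 <= pt <= 1).

Definition expect (g : 'M[bool]_(s, n) -> {set 'I_s} -> R) : R :=
  \sum_(A : 'M[bool]_(s, n)) \sum_(Rs : {set 'I_s})
     matrix_weight pa A * set_weight pt Rs * g A Rs.

Lemma weight_ge0 (A : 'M[bool]_(s, n)) (Rs : {set 'I_s}) :
  0 <= matrix_weight pa A * set_weight pt Rs.
Proof.
move: pa01 pt01 => /andP[? ?] /andP[? ?].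
apply: mulr_ge0; apply: prodr_ge0 => i _; last by case: (i \in Rs); lra.
by apply: prodr_ge0 => j _; case: (A i j); lra.
Qed.

Lemma eq_expect g g' : (forall A Rs, g A Rs = g' A Rs) -> expect g = expect g'.
Proof. by move=> eq_gg'; apply: eq_bigr => A _; apply: eq_bigr => Rs _; rewrite eq_gg'. Qed.

Lemma ler_expect g g' : (forall A Rs, g A Rs <= g' A Rs) -> expect g <= expect g'.
Proof.
move=> le_gg'; apply: ler_sum => A _; apply: ler_sum => Rs _.
by rewrite ler_wpM2l ?weight_ge0.
Qed.

Lemma expectB g g' : expect (fun A Rs => g A Rs - g' A Rs) = expect g - expect g'.
Proof.
rewrite /expect -sumrB; apply: eq_bigr => A _; rewrite -sumrB.
by apply: eq_bigr => Rs _; rewrite mulrBr.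
Qed.

Lemma expectD g g' : expect (fun A Rs => g A Rs + g' A Rs) = expect g + expect g'.
Proof.
rewrite /expect -big_split; apply: eq_bigr => A _; rewrite -big_split.
by apply: eq_bigr => Rs _; rewrite mulrDr.
Qed.

Lemma expect_sum (I : finType) (g : I -> 'M[bool]_(s, n) -> {set 'I_s} -> R) :
  expect (fun A Rs => \sum_i g i A Rs) = \sum_i expect (g i).
Proof.
rewrite /expect [RHS]exchange_big; apply: eq_bigr => A _.
rewrite [RHS]exchange_big; apply: eq_bigr => Rs _.
by rewrite mulr_sumr.
Qed.

Lemma expectZ k g : expect (fun A Rs => k * g A Rs) = k * expect g.
Proof.
rewrite /expect mulr_sumr; apply: eq_bigr => A _; rewrite mulr_sumr.
by apply: eq_bigr => Rs _; rewrite mulrCA.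
Qed.

Lemma expect1 : expect (fun _ _ => 1) = 1.
Proof.
rewrite /expect; under eq_bigr => A _ do under eq_bigr => Rs _ do rewrite mulr1.
rewrite -big_distrlr /= /matrix_weight /set_weight.
rewrite (@sum_mx_prod R s n (fun _ _ b => if b then pa else 1 - pa)).
rewrite (@sum_set_prod R s (fun _ b => if b then 1 - pt else pt)).
rewrite big1 ?mul1r => [|i _]; last first.
  by rewrite big1 // => j _; rewrite big_bool /= addrC subrK.
by rewrite big1 // => i _; rewrite big_bool /= subrK.
Qed.

Lemma expect_prod_col (j : 'I_n) (h : bool -> bool -> R) :
  expect (fun A Rs => \prod_i h (i \in Rs) (A i j)) =
  (\sum_r \sum_a (if r then 1 - pt else pt) * (if a then pa else 1 - pa) * h r a) ^+ s.
Proof.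
pose F r (b : bool) := (if b then pa else 1 - pa) * h r b.
have col_marginal (Rs : {set 'I_s}) :
    \sum_(A : 'M[bool]_(s, n)) matrix_weight pa A * \prod_i h (i \in Rs) (A i j)
    = \prod_i \sum_a F (i \in Rs) a.
  transitivity (\sum_(A : 'M[bool]_(s, n)) \prod_i \prod_k
      (if k == j then F (i \in Rs) (A i k) else (if A i k then pa else 1 - pa))).
    apply: eq_bigr => A _; rewrite -big_split /=; apply: eq_bigr => i _.
    rewrite (bigD1 j) //= [in RHS](bigD1 j) //= eqxx mulrAC.
    by congr (_ * _); apply: eq_bigr => k /negPf ->.
  rewrite (@sum_mx_prod R s n
    (fun i k b => if k == j then F (i \in Rs) b else if b then pa else 1 - pa)).
  apply: eq_bigr => i _.
  rewrite (bigD1 j) //= eqxx [X in _ * X]big1 ?mulr1 // => k /negPf ->.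
  by rewrite big_bool /= addrC subrK.
rewrite /expect exchange_big /=.
under eq_bigr => Rs _.
  under eq_bigr => A _ do rewrite mulrAC.
  rewrite -mulr_suml col_marginal /set_weight -big_split /=.
  over.
rewrite (@sum_set_prod R s (fun _ r => (\sum_a F r a) * (if r then 1 - pt else pt))).
rewrite prodr_const card_ord; congr (_ ^+ _).
by apply: eq_bigr => r _; rewrite mulr_suml; apply: eq_bigr => a _; rewrite mulrC mulrA.
Qed.

Lemma expect_indicator_le_expR (P : 'M[bool]_(s, n) -> {set 'I_s} -> bool)
    (f : 'M[bool]_(s, n) -> {set 'I_s} -> R) (u : R) :
  (forall A Rs, P A Rs -> u <= f A Rs) ->
  expect (fun A Rs => (P A Rs)%:R) <= expR (- u) * expect (fun A Rs => expR (f A Rs)).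
Proof.
move=> Pu; rewrite -expectZ; apply: ler_expect => A Rs; rewrite -expRD.
case: (boolP (P A Rs)) => [/Pu le_uf | _]; last exact: expR_ge0.
by apply: le_trans (expR_ge1Dx _); rewrite lerDl addrC subr_ge0.
Qed.

Local Notation mu := (s%:R * (pa * (1 - pt))).

Lemma mu_ge0 : 0 <= mu.
Proof. by move: pa01 pt01 => /andP[? ?] /andP[? ?]; rewrite !mulr_ge0 //; lra. Qed.

Lemma expect_expR_col_count (t : R) (j : 'I_n) :
  expect (fun A Rs => expR (t * col_count j A Rs)) <= expR (mu * (expR t - 1)).
Proof.
move: pa01 pt01 => /andP[pa0 pa1] /andP[pt0 pt1].
rewrite (eq_expect _ _ (expR_col_count t j)).
rewrite (expect_prod_col j (fun r a => if r && a then expR t else 1)) !big_bool /=.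
have -> : (1 - pt) * pa * expR t + (1 - pt) * (1 - pa) * 1 +
    (pt * pa * 1 + pt * (1 - pa) * 1) = 1 + pa * (1 - pt) * (expR t - 1) by ring.
rewrite -[mu * _]mulrA expRM_natl lerXn2r ?nnegrE ?expR_ge0 ?expR_ge1Dx //.
have q_le1 : pa * (1 - pt) <= 1 by rewrite mulr_ile1 //; lra.
have q_ge0 : 0 <= pa * (1 - pt) by rewrite mulr_ge0 //; lra.
have := expR_ge0 t; nra.
Qed.

(* [%R] is needed because the argument of [%:R] is parsed in [nat_scope]. *)
Lemma chernoff_upper_tail (e : R) (j : 'I_n) : 0 <= e <= 1 ->
  expect (fun A Rs => ((1 + e) * mu < col_count j A Rs)%R%:R) <= expR (- (mu * e ^+ 2 / 3)).
Proof.
move=> e01; have /andP[e0 _] := e01.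
have t_ge0 : 0 <= ln (1 + e) by rewrite ln_ge0 // lerDl.
apply: le_trans (expect_indicator_le_expR _
  (fun A Rs => ln (1 + e) * col_count j A Rs) (ln (1 + e) * ((1 + e) * mu)) _) _.
  by move=> A Rs /ltW; apply: ler_wpM2l.
apply: le_trans (ler_wpM2l (expR_ge0 _) (expect_expR_col_count _ j)) _.
rewrite -expRD ler_expR lnK ?posrE; last lra.
have := ler_wpM2l mu_ge0 (chernoff_upper_exponent e e01).
lra.
Qed.

Lemma chernoff_lower_tail (e : R) (j : 'I_n) : 0 <= e < 1 ->
  expect (fun A Rs => (col_count j A Rs < (1 - e) * mu)%R%:R) <= expR (- (mu * e ^+ 2 / 3)).
Proof.
move=> e01; have /andP[e0 e1] := e01.
have t_le0 : ln (1 - e) <= 0 by rewrite ln_le0 // gerBl.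
apply: le_trans (expect_indicator_le_expR _
  (fun A Rs => ln (1 - e) * col_count j A Rs) (ln (1 - e) * ((1 - e) * mu)) _) _.
  by move=> A Rs /ltW; apply: ler_wnM2l.
apply: le_trans (ler_wpM2l (expR_ge0 _) (expect_expR_col_count _ j)) _.
rewrite -expRD ler_expR lnK ?posrE; last lra.
have := ler_wpM2l mu_ge0 (chernoff_lower_exponent e e01).
have : 0 <= mu * e ^+ 2 by rewrite mulr_ge0 ?mu_ge0 ?sqr_ge0.
lra.
Qed.

Lemma expect_col_count_deviation (e : R) (j : 'I_n) : 0 <= e < 1 ->
  expect (fun A Rs => (~~ ((1 - e) * mu <= col_count j A Rs <= (1 + e) * mu))%:R)
  <= 2 * expR (- (mu * e ^+ 2 / 3)).
Proof.
move=> e01; have /andP[e0 e1] := e01.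
pose below (A : 'M[bool]_(s, n)) (Rs : {set 'I_s}) : R := (col_count j A Rs < (1 - e) * mu)%R%:R.
pose above (A : 'M[bool]_(s, n)) (Rs : {set 'I_s}) : R := ((1 + e) * mu < col_count j A Rs)%R%:R.
apply: le_trans (ler_expect _ (fun A Rs => below A Rs + above A Rs) _) _.
  move=> A Rs; rewrite /below /above negb_and -!ltNge.
  by do 2 case: (_ < _); rewrite /= ?addr0 ?add0r ?lerDl.
rewrite (expectD below above) mulr2n mulrDl mul1r.
by apply: lerD; [exact: chernoff_lower_tail | apply: chernoff_upper_tail; rewrite e0 ltW].
Qed.

Lemma prob_resilient_ge (delta : R) : 0 < delta -> 0 < mu ->
  1 - n%:R * (2 * expR (- (mu * (delta / (2 + delta)) ^+ 2 / 3)))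
  <= prob_resilient s n pa pt delta.
Proof.
move=> delta_gt0 mu_gt0; set e := delta / (2 + delta).
have e01 : 0 <= e < 1 by rewrite divr_ge0 ?ltr_pdivrMr /=; lra.
have widths : (1 + delta) * ((1 - e) * mu) = (1 + e) * mu.
  by rewrite /e; field; rewrite gt_eqF //; lra.
pose deviates (j : 'I_n) (A : 'M[bool]_(s, n)) (Rs : {set 'I_s}) :=
  ~~ ((1 - e) * mu <= col_count j A Rs <= (1 + e) * mu).
have -> : prob_resilient s n pa pt delta = expect (fun A Rs => `[< resilient delta A Rs >]%:R).
  by apply: eq_bigr => A _; apply: eq_bigr => Rs _; case: ifP; rewrite ?mulr1 ?mulr0.
apply: le_trans (ler_expect (fun A Rs => 1 - \sum_j (deviates j A Rs)%:R) _ _); last first.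
  move=> A Rs; case: (boolP [exists j, deviates j A Rs]) => [/existsP[j dev_j] | ].
    rewrite (bigD1 j) //= dev_j /= mulr1n opprD addrA subrr add0r.
    by rewrite (le_trans _ (ler0n _ _)) // oppr_le0 sumr_ge0.
  rewrite negb_exists => /forallP /= all_good.
  rewrite big1 => [|j _]; last by rewrite (negbTE (all_good j)).
  rewrite subr0 asboolT //; apply: (resilient_of_col_count _ ((1 - e) * mu)).
    by rewrite mulr_gt0 //; lra.
  by move=> j; rewrite widths; have := all_good j; rewrite negbK.
rewrite (expectB (fun _ _ => 1)) expect1.
rewrite (expect_sum _ (fun j A Rs => (deviates j A Rs)%:R)) lerB //.
rewrite mulr_natl -[X in _ *+ X]card_ord -sumr_const.
by apply: ler_sum => j _; apply: expect_col_count_deviation.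
Qed.

End RandomAssignment.

Lemma ln_sqrt2_mul_gt0 (R : realType) (x : R) : 1 <= x -> 0 < ln (Num.sqrt 2 * x).
Proof.
have sqrt2_gt1 : 1 < Num.sqrt 2 :> R by rewrite -[X in X < _]sqrtr1 ltr_sqrt; lra.
by move=> x_ge1; rewrite ln_gt0 //; nra.
Qed.

Lemma expR_twice_ln_sqrt2_mul (R : realType) (x : R) : 0 < x ->
  expR (- (2 * ln (Num.sqrt 2 * x))) = (2 * x ^+ 2)^-1.
Proof.
move=> x_gt0; rewrite expRN expRM_natl lnK ?posrE ?mulr_gt0 ?sqrtr_gt0 //.
by rewrite exprMn sqr_sqrtr.
Qed.

Theorem theorem5 (R : realType) (n s : nat) (delta pt : R) :
  (1 <= n)%N -> (1 <= s)%N -> 0 < delta -> 0 <= pt -> pt < 1 ->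
  ell_param n delta pt <= s%:R ->
  1 - 1 / n%:R <= prob_resilient s n (ell_param n delta pt / s%:R) pt delta.
Proof.
move=> n_ge1 s_ge1 delta_gt0 pt_ge0 pt_lt1 ell_le_s.
have n_gt0 : 0 < n%:R :> R by rewrite ltr0n.
have s_gt0 : 0 < s%:R :> R by rewrite ltr0n.
pose L := ln (Num.sqrt 2 * n%:R : R).
have L_gt0 : 0 < L by rewrite ln_sqrt2_mul_gt0 // ler1n.
have delta2_gt0 : 0 < delta ^+ 2 by rewrite exprn_gt0.
have ell_gt0 : 0 < ell_param n delta pt.
  by rewrite !mulr_gt0 ?divr_gt0 ?exprn_gt0 ?invr_gt0 //; lra.
set pa := ell_param n delta pt / s%:R.
have pa01 : 0 <= pa <= 1 by rewrite divr_ge0 ?ler_pdivrMr ?mul1r //; lra.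
have pt01 : 0 <= pt <= 1 by rewrite pt_ge0 ltW.
have mu_eq : s%:R * (pa * (1 - pt)) = 6 * (2 + delta) ^+ 2 / delta ^+ 2 * L.
  by rewrite /pa /ell_param -/L; field; rewrite !gt_eqF //; lra.
apply: le_trans (prob_resilient_ge pa pt pa01 pt01 _ delta_gt0 _); last first.
  by rewrite mu_eq !mulr_gt0 ?invr_gt0 //; lra.
rewrite mu_eq.
have -> : 6 * (2 + delta) ^+ 2 / delta ^+ 2 * L * (delta / (2 + delta)) ^+ 2 / 3 = 2 * L.
  by field; rewrite !gt_eqF //; lra.
rewrite expR_twice_ln_sqrt2_mul //.
suff -> : n%:R * (2 * (2 * n%:R ^+ 2)^-1) = 1 / n%:R :> R by [].
by field; rewrite gt_eqF.
Qed.
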